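(* Let $P\in\mathbb{N}_0^{n\times n}$ be an incidence matrix with $n\geq 3$. If $P$ is positive upper triangular, i.e. $P_{ij}=0$ for $i>j$ and $P_{ij}\geq 1$ for all $i\leq j$, then $P$ exclusively represents reducible morphisms.
   Context: Let $\Sigma=\{a_1,\dots,a_n\}$. A morphism $\varphi:\Sigma^+\to\Sigma^+$ (non-empty images) is Parikh-positive if every letter occurs in $\varphi(a_1)\cdots\varphi(a_n)$. Its incidence matrix is $P(\varphi)=(m_{i,j})$ with $m_{i,j}=|\varphi(a_j)|_{a_i}$. An automorphism is an injective morphism mapping each letter to a single letter; a morphism is reducible if it equals $\psi_2\circ\psi_1$ with neither $\psi_1,\psi_2$ an automorphism. An incidence matrix $P$ exclusively represents reducible morphisms if every Parikh-positive morphism $\varphi$ with $P(\varphi)=P$ is reducible. *)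

From mathcomp Require Import all_boot all_algebra.
Set Implicit Arguments. Unset Strict Implicit. Unset Printing Implicit Defensive.

(* Alphabet Sigma = {a_1,...,a_n} is 'I_n; words are seq 'I_n.
   A morphism Sigma^+ -> Sigma^+ is determined by the images of letters. *)
Definition morph (n : nat) := 'I_n -> seq 'I_n.

(* non-empty images (so that the morphism maps Sigma^+ into Sigma^+) *)
Definition nonerasing n (f : morph n) : Prop := forall a, f a != [::].

Definition ext n (f : morph n) (w : seq 'I_n) : seq 'I_n := flatten (map f w).

Definition mcomp n (g f : morph n) : morph n := fun a => ext g (f a).

Definition parikh_positive n (f : morph n) : Prop :=
  forall i : 'I_n, i \in flatten [seq f j | j <- enum 'I_n].

Definition incidence n (f : morph n) : 'M[nat]_n :=
  \matrix_(i, j) count_mem i (f j).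

Definition automorphism n (f : morph n) : Prop :=
  injective (ext f) /\ forall a, size (f a) = 1%N.

Definition reducible n (f : morph n) : Prop :=
  exists g1 g2 : morph n,
    [/\ nonerasing g1, nonerasing g2, ~ automorphism g1, ~ automorphism g2
      & forall a, f a = mcomp g2 g1 a].

Definition exclusively_reducible n (P : 'M[nat]_n) : Prop :=
  forall f : morph n, nonerasing f -> parikh_positive f ->
    incidence f = P -> reducible f.

(* Upper triangularity with positive entries means that a_i occurs in phi(a_j)
   exactly when i <= j, so {a_1, a_2} is closed under phi.  Hence phi factors
   as psi2 o psi1, where psi1 agrees with phi on a_1, a_2 and fixes the other
   letters, and psi2 fixes a_1, a_2 and agrees with phi elsewhere.  Neither
   factor is an automorphism: psi1(a_2) = phi(a_2) contains a_1 and a_2, and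
   psi2(a_3) = phi(a_3) contains a_1 and a_3. *)
From mathcomp Require Import all_boot all_algebra.

Set Implicit Arguments.
Unset Strict Implicit.
Unset Printing Implicit Defensive.

Definition restrict_morph n (S : pred 'I_n) (f : morph n) : morph n :=
  fun a => if S a then f a else [:: a].

Lemma mem_morph_incidence n (f : morph n) i j :
  (i \in f j) = (0 < incidence f i j)%N.
Proof. by rewrite mxE -has_count has_pred1. Qed.

Lemma ext_id_in n (g : morph n) (w : seq 'I_n) :
  {in w, forall x, g x = [:: x]} -> ext g w = w.
Proof.
elim: w => [|x w IHw] gw //.
rewrite /ext /= gw ?mem_head //; congr (_ :: _).
by apply: IHw => y wy; rewrite gw // in_cons wy orbT.
Qed.

Lemma nonerasing_restrict n (S : pred 'I_n) (f : morph n) :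
  nonerasing f -> nonerasing (restrict_morph S f).
Proof. by move=> nf a; rewrite /restrict_morph; case: ifP. Qed.

Lemma mcomp_restrictC n (S : pred 'I_n) (f : morph n) :
  (forall a, S a -> all S (f a)) ->
  forall a, mcomp (restrict_morph (predC S) f) (restrict_morph S f) a = f a.
Proof.
move=> closedS a; rewrite /mcomp /restrict_morph; case: ifP => Sa.
  by apply: ext_id_in => x /(allP (closedS a Sa)) /= ->.
by rewrite /ext /= Sa cats0.
Qed.

Lemma not_automorphism_of_pair n (f : morph n) a (x y : 'I_n) :
  x != y -> x \in f a -> y \in f a -> ~ automorphism f.
Proof.
move=> neq_xy xfa yfa [_ /(_ a)].
case: (f a) xfa yfa => [|z [|? ?]] //=; rewrite !mem_seq1 => /eqP xz /eqP yz.
by move: neq_xy; rewrite xz yz eqxx.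
Qed.

Lemma reducible_restrict n (S : pred 'I_n) (f : morph n) a b (x y u v : 'I_n) :
  nonerasing f -> (forall c, S c -> all S (f c)) ->
  S a -> x != y -> x \in f a -> y \in f a ->
  ~~ S b -> u != v -> u \in f b -> v \in f b ->
  reducible f.
Proof.
move=> nf closedS Sa neq_xy xfa yfa Sb neq_uv ufb vfb.
exists (restrict_morph S f), (restrict_morph (predC S) f); split.
- exact: nonerasing_restrict.
- exact: nonerasing_restrict.
- by apply: (not_automorphism_of_pair (a := a) neq_xy);
    rewrite /restrict_morph Sa.
- by apply: (not_automorphism_of_pair (a := b) neq_uv);
    rewrite /restrict_morph /= Sb.
- by move=> c; rewrite mcomp_restrictC.
Qed.

Theorem proposition20 (n : nat) (P : 'M[nat]_n) :
  (3 <= n)%N ->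
  (forall i j : 'I_n, (j < i)%N -> P i j = 0%N) ->
  (forall i j : 'I_n, (i <= j)%N -> (1 <= P i j)%N) ->
  exclusively_reducible P.
Proof.
move=> n_ge3 P_lower P_upper f nf _ fP.
have memf i j : (i \in f j) = (i <= j)%N.
  rewrite mem_morph_incidence fP.
  by case: (leqP i j) => [/P_upper | /P_lower ->].
pose a1 := Ordinal (leq_trans (isT : 0 < 3)%N n_ge3).
pose a2 := Ordinal (leq_trans (isT : 1 < 3)%N n_ge3).
pose a3 := Ordinal n_ge3.
apply: (@reducible_restrict _ (fun c : 'I_n => c <= 1)%N f a2 a3 a1 a2 a1 a3);
  rewrite ?memf //.
by move=> c c_le1; apply/allP => x; rewrite memf => /leq_trans; apply.
Qed.
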